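(* Let $b_1<b_2$, $T$ be positive integers, write $T-b_1=pb_2+q$ with $p\ge1$, $0\le q<b_2$, and assume $T-b_2\ge(p+1)b_1$. Let $k=T-b_1$. Over the $(b_1,T-b_2)$ burst erasure channel the SR-2 code (defined in the context) has delay profile $$(\underbrace{(p+1)b_1,\dots,(p+1)b_1}_{q},\underbrace{pb_1,\dots,pb_1}_{b_2},\dots,\underbrace{2b_1,\dots,2b_1}_{b_2},\underbrace{b_1,\dots,b_1}_{b_2}).$$
   Context: Point-to-point code: given $P_0,\dots,P_M\in\mathbb F^{k\times(n-k)}$ ($P_i=0$ for $i\notin[0,M]$), messages $S[t]=(s_1[t],\dots,s_k[t])\in\mathbb F^k$ ($S[t]=0$ for $t<0$) are sent as $(S[t],P[t])$, $P[t]=\sum_{i=0}^M S[t-i]P_i$; a $(b,M)$ burst channel erases packets so that in every window of $M+1$ consecutive slots the erased slots form at most one run of consecutive slots of length at most $b$. Delay profile $(d_1,\dots,d_k)$: for every admissible erasure pattern and all $t,i$, $s_i[t]$ is determined by the packets received at times $\le t+d_i$. SR-2 code (memory $M=T-b_2$, $n-k=b_2$): $P_i\in\mathbb F_2^{k\times b_2}$, $i\in[0,T-b_2]$: (a) for $j\in[p]$, $P_{jb_1}$ has $I_{b_2}$ in rows $(p-j)b_2+q+1,\dots,(p-j+1)b_2+q$, zeros elsewhere; (b) $P_{(p+1)b_1}(r,r)=1$ for $r\in[q]$, zeros elsewhere; (c) all other $P_i=0$. *)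

From HB Require Import structures.
From mathcomp Require Import all_boot all_order all_algebra.
Set Implicit Arguments. Unset Strict Implicit. Unset Printing Implicit Defensive.
Import GRing.Theory.
Local Open Scope ring_scope.

(* Time slots are natural numbers t >= 0; S[t] = 0 for t < 0 is encoded by
   dropping the terms with t - i < 0 from the parity sum. Rows/columns are
   0-based ('I_k), i.e. paper row r corresponds to ordinal r-1. *)

Definition parity (F : fieldType) (k r M : nat) (P : nat -> 'M[F]_(k, r))
  (S : nat -> 'rV[F]_k) (t : nat) : 'rV[F]_r :=
  \sum_(i < M.+1 | (i <= t)%N) S (t - i)%N *m P i.

(* (b, M) burst erasure pattern: E t = true iff slot t is erased. *)
Definition burst_admissible (b M : nat) (E : nat -> bool) : Prop :=
  forall w : nat, exists a l : nat, (l <= b)%N /\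
    forall t : nat, (w <= t <= w + M)%N -> E t = (a <= t < a + l)%N.

(* Delay profile d: for every admissible erasure pattern and all t, i,
   s_i[t] is determined by the packets (S[u], P[u]) received (not erased)
   at times u <= t + d_i: any two message streams producing the same received
   packets up to that time agree on s_i[t]. *)
Definition has_delay_profile (F : fieldType) (k r M : nat)
  (P : nat -> 'M[F]_(k, r)) (b : nat) (d : 'I_k -> nat) : Prop :=
  forall E : nat -> bool, burst_admissible b M E ->
  forall (S S' : nat -> 'rV[F]_k) (t : nat) (i : 'I_k),
    (forall u : nat, (u <= t + d i)%N -> ~~ E u ->
        S u = S' u /\ parity M P S u = parity M P S' u) ->
    S t 0 i = S' t 0 i.

(* SR-2 code matrices P_i in F_2^{k x b2} (entries 0/1 viewed in F),
   k = T - b1 = p*b2 + q, memory M = T - b2.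
   (a) for j in [1,p], P_{j b1} has I_{b2} in (1-based) rows
       (p-j)b2+q+1 .. (p-j+1)b2+q, i.e. 0-based row rho, column c with
       rho = (p-j)b2 + q + c;
   (b) P_{(p+1)b1}(r,r) = 1 for r in [q];
   (c) all other P_i are 0. *)
Definition SR2 (F : fieldType) (T b1 b2 p q : nat) (i : nat) :
  'M[F]_(T - b1, b2) :=
  \matrix_(rho < T - b1, c < b2)
    (if [exists j : 'I_p.+1,
           [&& (1 <= j)%N, i == (j * b1)%N & (rho : nat) == ((p - j) * b2 + q + c)%N]]
        || [&& i == ((p + 1) * b1)%N, (rho : nat) == (c : nat) & (c < q)%N]
     then 1 else 0).

Definition SR2_delay (T b1 b2 p q : nat) (rho : 'I_(T - b1)) : nat :=
  if (rho < q)%N then ((p + 1) * b1)%N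
  else ((p - (rho - q) %/ b2) * b1)%N.

(* Decoding s_rho[t] only matters when slot t is erased.  The SR-2 matrix has a
   column c, read at delay d = SR2_delay rho, whose only non-zero entry is a 1
   in row rho; so P[t + d] at column c equals s_rho[t] plus symbols
   S[t + d - i] with i != d.  Every non-zero P_i sits at a multiple of b1, so
   these slots, and t + d itself, lie at distance between b1 and T - b2 from
   the erased slot t, which the burst channel therefore cannot erase. *)
From mathcomp Require Import all_boot all_order all_algebra.
From mathcomp Require Import zify.
Set Implicit Arguments. Unset Strict Implicit. Unset Printing Implicit Defensive.
Import GRing.Theory.

Lemma burst_erased_close b M E t v : burst_admissible b M E -> E t -> E v ->
  (v <= t + M)%N -> (t <= v + M)%N -> (v < t + b)%N && (t < v + b)%N.
Proof.
move=> adm Et Ev vtM tvM.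
have [a [l [lb run]]] := adm (minn v t).
have /esym : true = (a <= t < a + l)%N by rewrite -Et; apply: run; lia.
have /esym : true = (a <= v < a + l)%N by rewrite -Ev; apply: run; lia.
lia.
Qed.

Lemma burst_far_unerased b M E t v : burst_admissible b M E -> E t ->
  (v + b <= t)%N || (t + b <= v)%N -> (v <= t + M)%N -> (t <= v + M)%N ->
  ~~ E v.
Proof.
move=> adm Et far vtM tvM; apply/negP => Ev.
have := burst_erased_close adm Et Ev vtM tvM; lia.
Qed.

Lemma dvdn_neq_far b x y : b %| x -> b %| y -> x != y ->
  (x + b <= y)%N || (y + b <= x)%N.
Proof.
move=> /dvdnP [x' ->] /dvdnP [y' ->] xy.
have : x' != y' by apply: contraNneq xy => ->.
case: (ltngtP x' y') => [lt_xy | gt_xy | ->] //= _.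
  by apply/orP; left; nia.
by apply/orP; right; nia.
Qed.

Local Open Scope ring_scope.

Lemma parity_entry_recover (F : fieldType) k r M (P : nat -> 'M[F]_(k, r))
    (S S' : nat -> 'rV[F]_k) t d (rho : 'I_k) (c : 'I_r) :
  (d <= M)%N -> (forall r', P d r' c = (r' == rho)%:R) ->
  parity M P S (t + d) = parity M P S' (t + d) ->
  (forall (i : 'I_M.+1) r', (i <= t + d)%N -> (i : nat) != d ->
     P i r' c != 0 -> S (t + d - i)%N 0 r' = S' (t + d - i)%N 0 r') ->
  S t 0 rho = S' t 0 rho.
Proof.
move=> dM unit_col /(congr1 (fun v : 'rV[F]_r => v 0 c)) + agree.
have dM' : (d < M.+1)%N by [].
pose i0 := Ordinal dM'.
have entry_d (S0 : nat -> 'rV[F]_k) :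
    (S0 (t + d - i0)%N *m P i0) 0 c = S0 t 0 rho.
  rewrite mxE (bigD1 rho) //= unit_col eqxx mulr1 addnK big1 ?addr0 //.
  by move=> r' /negPf r'rho; rewrite unit_col r'rho mulr0.
rewrite /parity !summxE (bigD1 i0) ?leq_addl //=.
rewrite [X in _ = X](bigD1 i0) ?leq_addl //=.
have rest (i : 'I_M.+1) : (i <= t + d)%N && (i != i0) ->
    (S (t + d - i)%N *m P i) 0 c = (S' (t + d - i)%N *m P i) 0 c.
  move=> /andP [it i_i0]; rewrite !mxE; apply: eq_bigr => r' _.
  have [->|nz] := eqVneq (P i r' c) 0; first by rewrite !mulr0.
  rewrite agree //; apply: contraNneq i_i0 => id; exact: val_inj.
by rewrite !entry_d (eq_bigr _ rest) => /addIr.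
Qed.

Lemma SR2_dvd_support (F : fieldType) T b1 b2 p q i rho c :
  @SR2 F T b1 b2 p q i rho c != 0 -> (b1 %| i)%N.
Proof.
rewrite /SR2 mxE; case: ifP => [|_]; last by rewrite eqxx.
case/orP => [/existsP [j /and3P [_ /eqP -> _]] | /and3P [/eqP -> _ _]] _;
  exact: dvdn_mull.
Qed.

Lemma SR2_delay_dvd T b1 b2 p q rho : (b1 %| @SR2_delay T b1 b2 p q rho)%N.
Proof. by rewrite /SR2_delay; case: ifP => _; apply: dvdn_mull. Qed.

Lemma SR2_delay_bounds T b1 b2 p q (rho : 'I_(T - b1)) :
  (T - b1 = p * b2 + q)%N -> ((p + 1) * b1 <= T - b2)%N ->
  (b1 <= @SR2_delay T b1 b2 p q rho <= T - b2)%N.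
Proof.
move=> k_eq memory; have := ltn_ord rho.
rewrite [in X in (_ < X)%N]k_eq /SR2_delay => rho_lt.
case: ltnP => rho_q; first by apply/andP; split; [nia | lia].
have x_lt : ((rho - q) %/ b2 < p)%N by rewrite ltn_divLR; lia.
apply/andP; split; first nia.
apply: leq_trans _ memory.
by rewrite leq_mul // (leq_trans (leq_subr _ _) (leq_addr _ _)).
Qed.

Definition SR2_col (b2 q rho : nat) : nat :=
  if (rho < q)%N then rho else ((rho - q) %% b2)%N.

Lemma SR2_col_lt b2 q rho : (q < b2)%N -> (SR2_col b2 q rho < b2)%N.
Proof.
move=> q_lt; rewrite /SR2_col; case: ifP => [|_]; first lia.
by rewrite ltn_pmod //; lia.
Qed.

Lemma SR2_unit_column (F : fieldType) T b1 b2 p q (rho : 'I_(T - b1))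
    (c : 'I_b2) :
  (0 < b1)%N -> (T - b1 = p * b2 + q)%N -> (c : nat) = SR2_col b2 q rho ->
  forall r, @SR2 F T b1 b2 p q (@SR2_delay T b1 b2 p q rho) r c = (r == rho)%:R.
Proof.
move=> b1_gt0 k_eq; have := ltn_ord rho.
rewrite [in X in (_ < X)%N]k_eq => rho_lt c_eq r.
have mul_b1K x y : (x * b1 == y * b1)%N = (x == y) := eqn_pmul2r b1_gt0.
rewrite /SR2 /SR2_delay mxE -[r == rho]/((r : nat) == rho).
move: c_eq; rewrite /SR2_col.
case: ltnP => rho_q c_eq.
- rewrite eqxx c_eq rho_q andbT /=.
  rewrite (_ : [exists j : 'I_p.+1, _] = false); first by case: (_ == _).
  apply/negbTE/existsP => -[j /and3P [_ + _]].
  by rewrite mul_b1K => /eqP j_eq; have := ltn_ord j; lia.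
- have x_lt : ((rho - q) %/ b2 < p)%N by rewrite ltn_divLR; lia.
  move: (divn_eq (rho - q) b2) x_lt c_eq.
  set x := (_ %/ b2)%N; set m := (_ %% b2)%N; clearbody x m => rho_eq x_lt c_eq.
  rewrite mul_b1K (_ : (p - x == p + 1)%N = false) ?andbF ?orbF; last by lia.
  rewrite (_ : [exists j : 'I_p.+1, _] = ((r : nat) == rho));
    first by case: (_ == _).
  have j0_lt : (p - x < p.+1)%N by lia.
  apply/existsP/eqP => [[j /and3P [_ + /eqP ->]] | ->].
    rewrite mul_b1K c_eq => /eqP j_eq.
    by rewrite (_ : (p - j = x)%N); lia.
  exists (Ordinal j0_lt); rewrite /= eqxx c_eq.
  by apply/andP; split; [lia | apply/eqP; lia].
Qed.

Theorem mainTheorem9 (F : fieldType) (T b1 b2 p q : nat) :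
  (0 < b1)%N -> (b1 < b2)%N -> (0 < T)%N ->
  (T - b1)%N = (p * b2 + q)%N -> (1 <= p)%N -> (q < b2)%N ->
  ((p + 1) * b1 <= T - b2)%N ->
  @has_delay_profile F (T - b1) b2 (T - b2) (@SR2 F T b1 b2 p q) b1 (@SR2_delay T b1 b2 p q).
Proof.
move=> b1_gt0 _ _ k_eq _ q_lt memory E adm S S' t rho agree.
case Et: (E t); last by have [-> _] := agree t (leq_addr _ _) (negbT Et).
set d := SR2_delay _ _ _ _ in agree *.
have /andP [d_ge d_le] : (b1 <= d <= T - b2)%N :=
  SR2_delay_bounds rho k_eq memory.
have unerased (i : nat) : (b1 %| i)%N -> (i <= T - b2)%N -> (i <= t + d)%N ->
    i != d -> ~~ E (t + d - i)%N.
  move=> b1_i iM it i_d.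
  have far := dvdn_neq_far b1_i (SR2_delay_dvd _ _ _ rho) i_d.
  by apply: burst_far_unerased adm Et _ _ _; lia.
have c_lt := SR2_col_lt rho q_lt.
apply: (@parity_entry_recover _ _ _ _ _ _ _ t d rho (Ordinal c_lt) d_le).
- exact: SR2_unit_column.
- have t_d : ~~ E (t + d) by rewrite -[t + d]subn0; apply: unerased => //; lia.
  by have [_ ->] := agree _ (leqnn _) t_d.
- move=> i r it i_d /SR2_dvd_support b1_i.
  by have [-> _] := agree _ (leq_subr _ _) (unerased _ b1_i (ltn_ord i) it i_d).
Qed.
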